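(* Let $0<e<\Lambda$, $\phi_h>0$, $f:[0,\phi_h]\to(0,1]$ strictly concave, strictly decreasing, differentiable with $f(0)=1$. Consider the two-player game with action sets $[0,\phi_h]$ and payoffs $\tilde{\mathcal M}_i(\phi_i,\phi_{-i})$ given by: - if $\phi_i=\phi_{-i}$: $e\phi_i$ if $\phi_i<\underline\phi$, and $\frac{\Lambda}{2}f(\phi_i)\phi_i$ if $\phi_i\ge\underline\phi$; - if $\phi_i<\phi_{-i}$: $e\phi_i$ if $\phi_{-i}<\bar\phi$, and $\min\{\Lambda f(\phi_i),e\}\phi_i$ if $\phi_{-i}\ge\bar\phi$; - if $\phi_i>\phi_{-i}$: $e\phi_i$ if $\phi_i<\underline\phi$, $m(\phi_i)$ if $\phi_i\in[\underline\phi,\bar\phi)$, and $0$ if $\phi_i\ge\bar\phi$. Let $\phi^*_m$ be the unique maximizer of $m(\phi)=(\Lambda f(\phi)-e)\phi$ over $[0,\phi_h]$, and set $\phi_U^*=\phi^*_m$, $\phi_L^*=m(\phi^*_m)/e=\bigl(\frac{\Lambda f(\phi^*_m)}{e}-1\bigr)\phi^*_m$. If $\underline\phi<\phi^*_m\le\min\{\phi_h,\bar\phi\}$, then $[\phi_L^*,\phi_U^*]$ is an equilibrium cycle.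
   Context: These payoffs are the limiting (driver abandonment rate $\beta\to0$) long-run revenue rates of two symmetric ride-hailing platforms using static prices, when passengers (total Poisson rate $\Lambda$) split across platforms by a Wardrop equilibrium equalizing the probability of not obtaining a ride; $e$ is the effective driver arrival rate per platform and $f(\phi)$ the probability a passenger accepts price $\phi$. Thresholds: $\underline{\phi}:=\inf\{\phi\in[0,\phi_h]: f(\phi)\le 2e/\Lambda\}$, $\bar\phi:=\inf\{\phi\in[0,\phi_h]: f(\phi)\le e/\Lambda\}$, $\inf\emptyset=+\infty$ (so they equal $f^{-1}(2e/\Lambda)$, $f^{-1}(e/\Lambda)$ when in range and $0$ when $2e/\Lambda>1$, resp. $e/\Lambda>1$). Equilibrium cycle: a closed interval $[a,b]\subseteq[0,\phi_h]$ such that (i) for every player $i$, every $\phi_{-i}\in[a,b]$ and every $\phi_i\in[0,\phi_h]\setminus[a,b]$ there is $\phi_i'\in[a,b]$ with $\tilde{\mathcal M}_i(\phi_i',\phi_{-i})>\tilde{\mathcal M}_i(\phi_i,\phi_{-i})$; and (ii) for every $(\phi_1,\phi_2)\in[a,b]^2$ there exist a player $i$ and $\phi_i'\in[a,b]$ with $\tilde{\mathcal M}_i(\phi_i',\phi_{-i})>\tilde{\mathcal M}_i(\phi_i,\phi_{-i})$. *)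

From Stdlib Require Import Reals.
From Coquelicot Require Import Coquelicot.
Open Scope R_scope.

Definition in_I (ph x : R) : Prop := 0 <= x <= ph.

Definition strictly_concave_on (ph : R) (f : R -> R) : Prop :=
  forall x y t, in_I ph x -> in_I ph y -> x <> y -> 0 < t < 1 ->
    t * f x + (1 - t) * f y < f (t * x + (1 - t) * y).

Definition strictly_decreasing_on (ph : R) (f : R -> R) : Prop :=
  forall x y, in_I ph x -> in_I ph y -> x < y -> f y < f x.

(* thresholds: inf { phi in [0,ph] | f phi <= c }, with inf of the empty set = +oo
   (Glb_Rbar of the empty set is p_infty) *)
Definition thr (ph : R) (f : R -> R) (c : R) : Rbar :=
  Glb_Rbar (fun p => in_I ph p /\ f p <= c).

Definition phi_low (e Lam ph : R) (f : R -> R) : Rbar := thr ph f (2 * e / Lam).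
Definition phi_bar (e Lam ph : R) (f : R -> R) : Rbar := thr ph f (e / Lam).

Definition mfun (e Lam : R) (f : R -> R) (p : R) : R := (Lam * f p - e) * p.

Definition payoff (e Lam ph : R) (f : R -> R) (x y : R) : R :=
  match total_order_T x y with
  | inleft (right _) =>
      if Rbar_lt_dec (Finite x) (phi_low e Lam ph f) then e * x
      else Lam / 2 * f x * x
  | inleft (left _) =>
      if Rbar_lt_dec (Finite y) (phi_bar e Lam ph f) then e * x
      else Rmin (Lam * f x) e * x
  | inright _ =>
      if Rbar_lt_dec (Finite x) (phi_low e Lam ph f) then e * x
      else if Rbar_lt_dec (Finite x) (phi_bar e Lam ph f) then mfun e Lam f x
      else 0
  end.

(* Equilibrium cycle of a two-player game with action sets [0,ph];
   M1 x y = payoff of player 1 playing x against y, M2 x y = payoff of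
   player 2 playing x against player 1 playing y. *)
Definition equilibrium_cycle (ph : R) (M1 M2 : R -> R -> R) (a b : R) : Prop :=
  0 <= a /\ a <= b /\ b <= ph /\
  (forall y x, a <= y <= b -> in_I ph x -> ~ (a <= x <= b) ->
      exists x', a <= x' <= b /\ M1 x y < M1 x' y) /\
  (forall y x, a <= y <= b -> in_I ph x -> ~ (a <= x <= b) ->
      exists x', a <= x' <= b /\ M2 x y < M2 x' y) /\
  (forall p1 p2, a <= p1 <= b -> a <= p2 <= b ->
      (exists x', a <= x' <= b /\ M1 p1 p2 < M1 x' p2) \/
      (exists x', a <= x' <= b /\ M2 p2 p1 < M2 x' p1)).

(* Write U = phim and L = m(U)/e.  Prices in [L, U] lie strictly between the two thresholds,
   so there the lower-priced platform earns e x and the higher-priced one earns m x.  Against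
   any y in [L, U] a platform can secure e L = m U: by pricing at U when y < U, and by
   undercutting at L when y = U.  Every price outside [L, U] earns less: below L at most
   e x < e L, above U either m x < m U or 0.  Inside [L, U] there is no rest point: the
   lower-priced platform gains by raising its price towards the other one, and at a tie p the
   payoff (Lam/2) f(p) p is below e p because p lies above the lower threshold, so undercutting
   pays (or, at p = L, moving to U). *)
From Pilot Require Import Defs.
From Stdlib Require Import Reals Lra.
From Coquelicot Require Import Coquelicot.
Open Scope R_scope.

Lemma continuity_pt_near (f : R -> R) x eps : continuity_pt f x -> 0 < eps ->
  exists d, 0 < d /\ forall p, Rabs (p - x) < d -> Rabs (f p - f x) < eps.
Proof.
  intros Hc He.
  destruct (Hc eps He) as [d [Hd0 Hd]].
  exists d; split; [lra|]. intros p Hp.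
  destruct (Req_dec p x) as [->|Hne].
  - rewrite Rminus_eq_0, Rabs_R0; lra.
  - apply (Hd p). repeat split; auto.
Qed.

Section Threshold.
Variables (ph : R) (f : R -> R) (c : R).

Let S := fun p => in_I ph p /\ f p <= c.

Lemma thr_le p : in_I ph p -> f p <= c -> Rbar_le (thr ph f c) (Finite p).
Proof. intros Hp Hf. apply (Glb_Rbar_correct S). split; auto. Qed.

Lemma thr_ge0 : Rbar_le (Finite 0) (thr ph f c).
Proof. apply (Glb_Rbar_correct S). intros x [[Hx _] _]. simpl. lra. Qed.

Hypothesis Hdec : strictly_decreasing_on ph f.

Lemma lt_of_thr_lt p : in_I ph p -> Rbar_lt (thr ph f c) (Finite p) -> f p < c.
Proof.
  intros Hp Hlt. destruct (Rlt_le_dec (f p) c) as [|Hge]; auto.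
  exfalso. apply (Rbar_lt_not_le _ _ Hlt), (Glb_Rbar_correct S).
  intros x [Hx Hfx]. simpl. destruct (Rlt_le_dec x p) as [Hxp|]; auto.
  specialize (Hdec x p Hx Hp Hxp). lra.
Qed.

Lemma lt_thr_of_lt p : in_I ph p -> continuity_pt f p -> c < f p ->
  Rbar_lt (Finite p) (thr ph f c).
Proof.
  intros Hp Hc Hcf.
  destruct (continuity_pt_near f p (f p - c) Hc) as [d [Hd Hnear]]; [lra|].
  apply (Rbar_lt_le_trans _ (Finite (p + d))); [simpl; lra|].
  apply (Glb_Rbar_correct S). intros x [Hx Hfx]. simpl.
  destruct (Rlt_le_dec x (p + d)) as [Hxd|]; [exfalso|lra].
  destruct (Rle_lt_dec x p) as [Hxp|Hpx].
  - destruct (Req_dec x p) as [->|Hne]; [lra|].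
    assert (f p < f x) by (apply Hdec; auto; lra). lra.
  - assert (Rabs (x - p) < d) as Hxp by (rewrite Rabs_right; lra).
    apply Hnear, Rabs_def2 in Hxp. lra.
Qed.

Lemma le_at_thr q : 0 < q <= ph -> continuity_pt f q -> thr ph f c = Finite q -> c <= f q.
Proof.
  intros Hq Hc Hthr. destruct (Rlt_le_dec (f q) c) as [Hlt|]; auto. exfalso.
  destruct (continuity_pt_near f q (c - f q) Hc) as [d [Hd Hnear]]; [lra|].
  set (p := Rmax 0 (q - d / 2)).
  assert (0 <= p) by apply Rmax_l.
  assert (q - d / 2 <= p) by apply Rmax_r.
  assert (p < q) by (apply Rmax_lub_lt; lra).
  assert (Rabs (p - q) < d) as Hpq by (rewrite Rabs_left; lra).
  apply Hnear, Rabs_def2 in Hpq.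
  assert (Hle := thr_le p ltac:(split; lra) ltac:(lra)).
  rewrite Hthr in Hle. simpl in Hle. lra.
Qed.

End Threshold.

Section Payoff.
Variables (e Lam ph : R) (f : R -> R).

Notation payoff := (payoff e Lam ph f).
Notation phi_low := (phi_low e Lam ph f).
Notation phi_bar := (phi_bar e Lam ph f).

Lemma payoff_lt x y : x < y -> Rbar_lt (Finite y) phi_bar -> payoff x y = e * x.
Proof.
  intros Hxy Hy. unfold Defs.payoff.
  destruct (total_order_T x y) as [[|]|]; try lra.
  destruct (Rbar_lt_dec y phi_bar); tauto.
Qed.

Lemma payoff_lt_le x y : 0 < e -> 0 <= x -> x < y -> payoff x y <= e * x.
Proof.
  intros He Hx Hxy. unfold Defs.payoff.
  destruct (total_order_T x y) as [[|]|]; try lra.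
  destruct (Rbar_lt_dec y phi_bar); try lra.
  apply Rmult_le_compat_r, Rmin_r; auto.
Qed.

Lemma payoff_gt x y : y < x -> ~ Rbar_lt (Finite x) phi_low -> Rbar_lt (Finite x) phi_bar ->
  payoff x y = mfun e Lam f x.
Proof.
  intros Hxy Hlow Hbar. unfold Defs.payoff.
  destruct (total_order_T x y) as [[|]|]; try lra.
  destruct (Rbar_lt_dec x phi_low); try tauto.
  destruct (Rbar_lt_dec x phi_bar); tauto.
Qed.

Lemma payoff_gt_le x y : y < x -> ~ Rbar_lt (Finite x) phi_low ->
  payoff x y <= Rmax (mfun e Lam f x) 0.
Proof.
  intros Hxy Hlow. unfold Defs.payoff.
  destruct (total_order_T x y) as [[|]|]; try lra.
  destruct (Rbar_lt_dec x phi_low); try tauto.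
  destruct (Rbar_lt_dec x phi_bar); [apply Rmax_l | apply Rmax_r].
Qed.

Lemma payoff_tie x : ~ Rbar_lt (Finite x) phi_low -> payoff x x = Lam / 2 * f x * x.
Proof.
  intros Hlow. unfold Defs.payoff.
  destruct (total_order_T x x) as [[|]|]; try lra.
  destruct (Rbar_lt_dec x phi_low); tauto.
Qed.

End Payoff.

Section Cycle.
Variables (e Lam ph : R) (f : R -> R) (phim : R).
Hypotheses (He : 0 < e) (HeLam : e < Lam).
Hypothesis Hdec : strictly_decreasing_on ph f.
Hypothesis Hcont : forall x, in_I ph x -> continuity_pt f x.
Hypothesis Hphim : in_I ph phim.
Hypothesis Hmax : forall p, in_I ph p -> p <> phim -> mfun e Lam f p < mfun e Lam f phim.
Hypothesis Hlow : Rbar_lt (phi_low e Lam ph f) (Finite phim).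

Notation payoff := (payoff e Lam ph f).
Notation phi_low := (phi_low e Lam ph f).
Notation phi_bar := (phi_bar e Lam ph f).
Notation m := (mfun e Lam f).
Local Notation phiL := (m phim / e).

Lemma e_phiL : e * phiL = m phim.
Proof. field; lra. Qed.

Lemma phim_pos : 0 < phim.
Proof.
  assert (H0 := thr_ge0 ph f (2 * e / Lam)). fold phi_low in H0.
  destruct phi_low; simpl in *; try contradiction; lra.
Qed.

Lemma m_phim_pos : 0 < m phim.
Proof.
  assert (H0 := phim_pos). replace 0 with (m 0) by (unfold mfun; ring).
  destruct Hphim. apply Hmax; [split|]; lra.
Qed.

Lemma phiL_pos : 0 < phiL.
Proof. assert (H := m_phim_pos). apply Rdiv_lt_0_compat; lra. Qed.

Lemma phim_lt_phi_bar : Rbar_lt (Finite phim) phi_bar.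
Proof.
  apply lt_thr_of_lt; auto.
  assert (H := m_phim_pos). assert (H0 := phim_pos). unfold mfun in H.
  apply Rlt_div_l; nra.
Qed.

Lemma below_phi_bar p : p <= phim -> Rbar_lt (Finite p) phi_bar.
Proof.
  intros Hp. apply (Rbar_le_lt_trans _ (Finite phim)); [simpl; lra|].
  exact phim_lt_phi_bar.
Qed.

Lemma above_phi_low p : in_I ph p -> Rbar_lt phi_low (Finite p) -> Lam * f p < 2 * e.
Proof.
  intros Hp Hlt. apply lt_of_thr_lt, Rlt_div_r in Hlt; auto; lra.
Qed.

Lemma phiL_lt_phim : phiL < phim.
Proof.
  apply (Rmult_lt_reg_l e); auto. rewrite e_phiL. unfold mfun.
  assert (H := above_phi_low phim Hphim Hlow). assert (H0 := phim_pos). nra.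
Qed.

(* At q = phi_low the continuity of f gives Lam f q >= 2 e, i.e. m q >= e q;
   so q >= phiL would make q a second maximiser of m. *)
Lemma phi_low_lt_phiL : Rbar_lt phi_low (Finite phiL).
Proof.
  assert (H0 := thr_ge0 ph f (2 * e / Lam)). fold phi_low in H0.
  assert (HLU := phiL_lt_phim). assert (HL0 := phiL_pos).
  destruct phi_low as [q| |] eqn:Eq; simpl in *; try contradiction.
  destruct (Rlt_le_dec q phiL) as [|HLq]; auto. exfalso.
  assert (Hq : in_I ph q) by (destruct Hphim; split; lra).
  assert (Hfq : 2 * e / Lam <= f q).
  { apply (le_at_thr ph f); [destruct Hphim; split; lra | auto | exact Eq]. }
  assert (Hmq : e * q <= m q).
  { apply Rle_div_l in Hfq; [|lra]. unfold mfun. nra. }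
  assert (m q < m phim) by (apply Hmax; auto; lra).
  assert (e * phiL <= e * q) by (apply Rmult_le_compat_l; lra).
  rewrite e_phiL in *. lra.
Qed.

Lemma not_below_phi_low p : phiL <= p -> ~ Rbar_lt (Finite p) phi_low.
Proof.
  intros Hp Hlt. apply (Rbar_lt_not_le _ _ Hlt).
  apply Rbar_lt_le, (Rbar_lt_le_trans _ (Finite phiL)); [apply phi_low_lt_phiL | simpl; lra].
Qed.

Lemma secure_value y : phiL <= y <= phim ->
  exists x, phiL <= x <= phim /\ payoff x y = e * phiL.
Proof.
  intros Hy. assert (HLU := phiL_lt_phim).
  destruct (Rlt_le_dec y phim) as [HyU|HyU].
  - exists phim; split; [lra|]. rewrite e_phiL.
    apply payoff_gt; [lra | apply not_below_phi_low; lra | apply phim_lt_phi_bar].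
  - exists phiL; split; [lra|]. apply payoff_lt; [lra | apply below_phi_bar; lra].
Qed.

Lemma payoff_outside_lt y x : phiL <= y <= phim -> in_I ph x -> ~ (phiL <= x <= phim) ->
  payoff x y < e * phiL.
Proof.
  intros Hy [Hx0 Hxph] Hout. assert (HL0 := phiL_pos).
  destruct (Rlt_le_dec x phiL) as [HxL|HLx].
  - assert (payoff x y <= e * x) by (apply payoff_lt_le; lra). nra.
  - assert (HxU : phim < x) by lra.
    assert (Hle := payoff_gt_le e Lam ph f x y ltac:(lra) (not_below_phi_low x HLx)).
    assert (m x < m phim) by (apply Hmax; [split|]; lra).
    rewrite e_phiL. apply (Rle_lt_trans _ _ _ Hle), Rmax_lub_lt; auto.
    apply m_phim_pos.
Qed.

Lemma better_reply y x : phiL <= y <= phim -> in_I ph x -> ~ (phiL <= x <= phim) ->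
  exists x', phiL <= x' <= phim /\ payoff x y < payoff x' y.
Proof.
  intros Hy Hx Hout. destruct (secure_value y Hy) as [x' [Hx' Hval]].
  exists x'; split; auto. rewrite Hval. apply payoff_outside_lt; auto.
Qed.

Lemma tie_improvable p : phiL <= p <= phim ->
  exists x, phiL <= x <= phim /\ payoff p p < payoff x p.
Proof.
  intros Hp. assert (HLU := phiL_lt_phim). assert (HL0 := phiL_pos).
  rewrite (payoff_tie e Lam ph f p (not_below_phi_low p ltac:(lra))).
  assert (Hf : Lam * f p < 2 * e).
  { apply above_phi_low; [destruct Hphim; split; lra|].
    apply (Rbar_lt_le_trans _ (Finite phiL)); [apply phi_low_lt_phiL | simpl; lra]. }
  set (g := Lam / 2 * f p * p).
  assert (Htie : g < e * p).
  { assert (Lam * f p * p < 2 * e * p) by (apply Rmult_lt_compat_r; lra). unfold g; lra. }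
  destruct (Req_dec p phiL) as [->|HpL].
  - exists phim; split; [lra|].
    rewrite (payoff_gt e Lam ph f phim phiL);
      [rewrite <- e_phiL; lra | lra | apply not_below_phi_low; lra | apply phim_lt_phi_bar].
  - set (x := Rmax phiL ((g / e + p) / 2)).
    assert (phiL <= x) by apply Rmax_l.
    assert ((g / e + p) / 2 <= x) by apply Rmax_r.
    assert (Hge : e * (g / e) = g) by (field; lra).
    assert (g / e < p) by (apply (Rmult_lt_reg_l e); lra).
    assert (x < p) by (apply Rmax_lub_lt; lra).
    exists x; split; [lra|].
    rewrite (payoff_lt e Lam ph f x p); [|lra | apply below_phi_bar; lra].
    assert (e * ((g / e + p) / 2) <= e * x) by (apply Rmult_le_compat_l; lra).
    lra.
Qed.

Lemma lower_improvable p1 p2 : phiL <= p1 <= phim -> phiL <= p2 <= phim -> p1 <= p2 ->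
  exists x, phiL <= x <= phim /\ payoff p1 p2 < payoff x p2.
Proof.
  intros H1 H2 H12. destruct (Req_dec p1 p2) as [<-|Hne]; [apply tie_improvable; auto|].
  exists ((p1 + p2) / 2); split; [lra|].
  rewrite !(payoff_lt e Lam ph f _ p2); try lra; try (apply below_phi_bar; lra).
  apply Rmult_lt_compat_l; lra.
Qed.

End Cycle.

Theorem theorem5 (e Lam ph : R) (f : R -> R) (phim : R) :
  0 < e -> e < Lam -> 0 < ph ->
  (forall x, in_I ph x -> 0 < f x <= 1) ->
  strictly_concave_on ph f ->
  strictly_decreasing_on ph f ->
  (forall x, in_I ph x -> ex_derive f x) ->
  f 0 = 1 ->
  (* phim is the unique maximizer of m over [0, ph] *)
  in_I ph phim ->
  (forall p, in_I ph p -> p <> phim -> mfun e Lam f p < mfun e Lam f phim) ->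
  Rbar_lt (phi_low e Lam ph f) (Finite phim) ->
  phim <= ph ->
  Rbar_le (Finite phim) (phi_bar e Lam ph f) ->
  equilibrium_cycle ph (payoff e Lam ph f) (payoff e Lam ph f)
    (mfun e Lam f phim / e) phim.
Proof.
  intros He HeLam _ _ _ Hdec Hder _ Hphim Hmax Hlow _ _.
  assert (Hcont : forall x, in_I ph x -> continuity_pt f x).
  { intros x Hx. apply continuity_pt_filterlim, (ex_derive_continuous f x (Hder x Hx)). }
  assert (HL0 : 0 < mfun e Lam f phim / e) by (eapply phiL_pos; eauto).
  assert (HLU : mfun e Lam f phim / e < phim) by (eapply phiL_lt_phim; eauto).
  pose proof (better_reply e Lam ph f phim He HeLam Hdec Hcont Hphim Hmax Hlow) as Hbetter.
  pose proof (lower_improvable e Lam ph f phim He HeLam Hdec Hcont Hphim Hmax Hlow) as Hlower.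
  split; [lra|]. split; [lra|]. split; [destruct Hphim; lra|].
  split; [exact Hbetter|]. split; [exact Hbetter|].
  intros p1 p2 H1 H2. destruct (Rle_lt_dec p1 p2).
  - left. apply Hlower; auto.
  - right. apply Hlower; auto; lra.
Qed.
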